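(* Let $R$ be a compact noetherian local ring with maximal ideal $\mathfrak{m}_R$, $\sigma$ a ring automorphism of $R$ with $\sigma(\mathfrak{m}_R)=\mathfrak{m}_R$, and $\delta$ a $\sigma$-derivation with $\delta(R)\subseteq\mathfrak{m}_R$, $\delta(\mathfrak{m}_R)\subseteq\mathfrak{m}_R^2$. Let $A=R[[Y;\sigma,\delta]]$ and $B=R[Y;\sigma,\delta]\subseteq A$. Let $M$ be a finitely generated $A$-module which is finitely generated as an $R$-module. Then every $B$-submodule $N\subseteq M$ is an $A$-submodule, and every $B$-module quotient of $M$ is an $A$-module quotient.
   Context: A $\sigma$-derivation is an additive map with $\delta(rs)=\delta(r)s+\sigma(r)\delta(s)$. $R[[Y;\sigma,\delta]]$ is the skew power series ring of formal series $\sum r_nY^n$ with multiplication determined by $Yr=\sigma(r)Y+\delta(r)$, and $R[Y;\sigma,\delta]$ the subring of polynomials. *)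

From HB Require Import structures.
From mathcomp Require Import all_boot all_order all_algebra.
Set Implicit Arguments. Unset Strict Implicit. Unset Printing Implicit Defensive.
Import GRing.Theory.
Local Open Scope ring_scope.

Section SkewDefs.
Variable R : nzRingType.

Inductive addcl (P : R -> Prop) : R -> Prop :=
| addcl0 : addcl P 0
| addclP x : P x -> addcl P x
| addclD x y : addcl P x -> addcl P y -> addcl P (x + y).

Fixpoint mpow (m : R -> Prop) (e : nat) : R -> Prop :=
  match e with
  | 0 => fun _ => True
  | e'.+1 => addcl (fun x => exists a b, [/\ m a, mpow m e' b & x = a * b])
  end.

Definition left_ideal (I : R -> Prop) :=
  [/\ I 0, forall x y, I x -> I y -> I (x + y) & forall r x, I x -> I (r * x)].
Definition right_ideal (I : R -> Prop) :=
  [/\ I 0, forall x y, I x -> I y -> I (x + y) & forall r x, I x -> I (x * r)].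
Definition two_sided_ideal (I : R -> Prop) := left_ideal I /\ right_ideal I.

Definition noetherian :=
  (forall I : nat -> R -> Prop, (forall n, left_ideal (I n)) ->
     (forall n x, I n x -> I n.+1 x) ->
     exists N, forall n x, (N <= n)%N -> I n x -> I N x) /\
  (forall I : nat -> R -> Prop, (forall n, right_ideal (I n)) ->
     (forall n x, I n x -> I n.+1 x) ->
     exists N, forall n x, (N <= n)%N -> I n x -> I N x).

Definition local_with_max_ideal (m : R -> Prop) :=
  [/\ two_sided_ideal m, ~ m 1 &
      forall x, ~ m x -> exists y, x * y = 1 /\ y * x = 1].

Definition madic_open (m : R -> Prop) (U : R -> Prop) :=
  forall x, U x -> exists e, forall y, mpow m e (y - x) -> U y.

(* R is compact (Hausdorff) for the m-adic topology *)
Definition madic_compact (m : R -> Prop) :=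
  (forall (I : Type) (U : I -> R -> Prop),
     (forall i, madic_open m (U i)) -> (forall x, exists i, U i x) ->
     exists (k : nat) (s : 'I_k -> I), forall x, exists j, U (s j) x) /\
  (forall x, (forall e, mpow m e x) -> x = 0).

Definition sigma_derivation (sigma : R -> R) (delta : R -> R) :=
  (forall x y, delta (x + y) = delta x + delta y) /\
  (forall x y, delta (x * y) = delta x * y + sigma x * delta y).

(* formal skew power series sum_n f n Y^n are represented by f : nat -> R *)
Definition series := nat -> R.
Definition polynomial_series (f : series) := exists N, forall n, (N <= n)%N -> f n = 0.
Definition cst (r : R) : series := fun n => if n == 0%N then r else 0.
Definition series_add (f g : series) : series := fun n => f n + g n.

(* Y^n r = sum_k skew_coef n k r Y^k, from Y r = sigma(r) Y + delta(r) *)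
Fixpoint skew_coef (sigma delta : R -> R) (n k : nat) (r : R) : R :=
  match n with
  | 0 => if k == 0%N then r else 0
  | n'.+1 => (if k is k'.+1 then sigma (skew_coef sigma delta n' k' r) else 0)
             + delta (skew_coef sigma delta n' k r)
  end.

(* partial sum (over n < N) of the coefficient of Y^j in
   (sum_n f n Y^n)(sum_i g i Y^i) = sum_{n,i} f n (Y^n g i) Y^i *)
Definition partial_prod sigma delta (f g : series) (N j : nat) : R :=
  \sum_(i < j.+1) \sum_(n < N) f n * skew_coef sigma delta n (j - i) (g i).

(* h is the product f * g in R[[Y;sigma,delta]]: each coefficient is the
   m-adic limit of the partial sums *)
Definition is_skew_prod (m : R -> Prop) sigma delta (f g h : series) :=
  forall j e, exists N0, forall N, (N0 <= N)%N ->
    mpow m e (h j - partial_prod sigma delta f g N j).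

Section Modules.
Variable M : zmodType.

(* a left module over the subring of series satisfying [P]
   (P = all series: A = R[[Y;sigma,delta]]; P = polynomial_series: B = R[Y;sigma,delta]) *)
Definition skew_module_over (P : series -> Prop) (m : R -> Prop) sigma delta
    (act : series -> M -> M) :=
  [/\ forall f x y, P f -> act f (x + y) = act f x + act f y,
      forall f g x, P f -> P g -> act (series_add f g) x = act f x + act g x,
      forall x, act (cst 1) x = x &
      forall f g h x, P f -> P g -> P h -> is_skew_prod m sigma delta f g h ->
        act h x = act f (act g x)].

Definition skew_A_module := skew_module_over (fun _ => True).
Definition skew_B_module := skew_module_over polynomial_series.

Definition fg_over_A (act : series -> M -> M) :=
  exists n (gen : 'I_n -> M), forall x, exists c : 'I_n -> series,
    x = \sum_(i < n) act (c i) (gen i).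
Definition fg_over_R (act : series -> M -> M) :=
  exists n (gen : 'I_n -> M), forall x, exists c : 'I_n -> R,
    x = \sum_(i < n) act (cst (c i)) (gen i).

Definition submodule_over (P : series -> Prop) (act : series -> M -> M)
    (N : M -> Prop) :=
  [/\ N 0, forall x y, N x -> N y -> N (x + y) &
      forall f x, P f -> N x -> N (act f x)].
Definition A_submodule := submodule_over (fun _ => True).
Definition B_submodule := submodule_over polynomial_series.
End Modules.
End SkewDefs.

Arguments polynomial_series {R}.
Arguments cst {R}.
Arguments series_add {R}.
Arguments skew_coef {R}.
Arguments partial_prod {R}.

From mathcomp Require Import all_boot all_order all_algebra zify.
From Stdlib Require Import Classical ClassicalEpsilon FunctionalExtensionality.
Set Implicit Arguments. Unset Strict Implicit. Unset Printing Implicit Defensive.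
Import GRing.Theory.
Local Open Scope ring_scope.

(* Let g_1, ..., g_s generate M over R, and let m^e M be the set of
   combinations of the g_j with coefficients in m^e.
   (1) Every f in A maps m^e M into itself: the coefficient of Y^k in Y^n r
       lies in m^(n - k), so for r in m^e the product f r converges to a
       series with coefficients in m^e, and such a series is a combination
       \sum_t l_t h_t of generators l_t of the right ideal m^e.
   (2) For every e some Y^n maps M into m^e M: as R / m^e is finite, two
       powers Y^a x and Y^b x (a < b) agree modulo m^e M, and 1 - Y^(b - a)
       is invertible in A.
   (3) Every R-submodule of M is m-adically closed: its coordinate vectors
       form a finitely generated submodule of R^s, and by compactness the
       coefficients of approximations can be made to converge.
   For f in A and x in a B-submodule N, f x differs from the polynomial
   truncation of f below degree n applied to x by an element of A Y^n M,
   which lies in m^e M by (1) and (2); hence f x is in N by (3). For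
   quotients, apply this to the kernel. *)

Lemma sum_ord_deltar (R : nzRingType) (F : nat -> R) (N a : nat) :
  \sum_(k < N) F k * (k == a :> nat)%:R = if (a < N)%N then F a else 0.
Proof.
rewrite -(big_ord1_eq (+%R : Monoid.law (0 : R)) F) [RHS]big_mkcond /=.
apply: eq_bigr => k _.
by case: eqP; rewrite ?mulr1 ?mulr0.
Qed.

Lemma sum_ord_deltal (R : nzRingType) (F : nat -> R) (N a : nat) :
  \sum_(k < N) (k == a :> nat)%:R * F k = if (a < N)%N then F a else 0.
Proof.
rewrite -(big_ord1_eq (+%R : Monoid.law (0 : R)) F) [RHS]big_mkcond /=.
apply: eq_bigr => k _.
by case: eqP; rewrite ?mul1r ?mul0r.
Qed.

Lemma leq_incr_self (phi : nat -> nat) :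
  (forall k, phi k < phi k.+1)%N -> forall k, (k <= phi k)%N.
Proof. by move=> incr; elim=> // k IHk; exact: leq_ltn_trans IHk (incr k). Qed.

Section IdealPowers.
Variables (R : nzRingType) (m : R -> Prop).

Lemma addcl_map (P Q : R -> Prop) (f : R -> R) :
  f 0 = 0 -> (forall x y, f (x + y) = f x + f y) ->
  (forall x, P x -> addcl Q (f x)) -> forall x, addcl P x -> addcl Q (f x).
Proof.
move=> f0 fD fP x; elim=> [|y /fP //|y z _ IHy _ IHz].
- by rewrite f0; constructor.
- by rewrite fD; apply: addclD.
Qed.

Lemma mpow0 e : mpow m e 0.
Proof. by case: e => [|e] //=; constructor. Qed.

Lemma mpowD e x y : mpow m e x -> mpow m e y -> mpow m e (x + y).
Proof. by case: e => [|e] //=; apply: addclD. Qed.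

Lemma mpow_sum e (I : Type) (r : seq I) (P : pred I) (F : I -> R) :
  (forall i, P i -> mpow m e (F i)) -> mpow m e (\sum_(i <- r | P i) F i).
Proof.
by move=> mF; elim/big_ind: _ => //; [exact: mpow0 | exact: mpowD].
Qed.

Lemma mpow_mulr e x r : mpow m e x -> mpow m e (x * r).
Proof.
elim: e x => [|e IHe] x //=.
apply: (addcl_map (f := fun x => x * r)); [exact: mul0r | by move=> ??; rewrite mulrDl|].
move=> _ [a [b [ma mb ->]]]; apply: addclP; exists a, (b * r).
by rewrite mulrA; split=> //; apply: IHe.
Qed.

Lemma mpow_le e e' x : (e' <= e)%N -> mpow m e x -> mpow m e' x.
Proof.
elim: e e' x => [|e IHe] [|e'] x //= le_e'e.
apply: (addcl_map (f := id)) => // _ [a [b [ma mb ->]]].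
by apply: addclP; exists a, b; split=> //; apply: IHe.
Qed.

Lemma mpow1 x : m x -> mpow m 1 x.
Proof. by move=> mx; apply: addclP; exists x, 1; rewrite mulr1. Qed.

Hypothesis m_ideal : two_sided_ideal m.

Lemma mpow_mull e x r : mpow m e x -> mpow m e (r * x).
Proof.
case: e => [|e] //=; have [[_ _ mM] _] := m_ideal.
apply: (addcl_map (f := fun x => r * x)); [exact: mulr0 | by move=> ??; rewrite mulrDr|].
move=> _ [a [b [ma mb ->]]]; apply: addclP; exists (r * a), b.
by rewrite mulrA; split=> //; apply: mM.
Qed.

Lemma mpowN e x : mpow m e x -> mpow m e (- x).
Proof. by rewrite -mulN1r; apply: mpow_mull. Qed.

Lemma mpow_mul a b x y : mpow m a x -> mpow m b y -> mpow m (a + b) (x * y).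
Proof.
elim: a x => [|a IHa] x /=; first by move=> _; apply: mpow_mull.
move=> + my; apply: (addcl_map (f := fun x => x * y)).
- exact: mul0r.
- by move=> ??; rewrite mulrDl.
move=> _ [c [d [mc md ->]]]; apply: addclP; exists c, (d * y).
by rewrite mulrA; split=> //; apply: IHa.
Qed.

End IdealPowers.

Section SigmaDerivation.
Variables (R : nzRingType) (sigma : {rmorphism R -> R}) (delta : R -> R).
Hypothesis delta_der : sigma_derivation sigma delta.

Lemma deltaD x y : delta (x + y) = delta x + delta y.
Proof. by case: delta_der. Qed.

Lemma deltaM x y : delta (x * y) = delta x * y + sigma x * delta y.
Proof. by case: delta_der. Qed.

Lemma delta0 : delta 0 = 0.
Proof. by apply: (@addrI _ (delta 0)); rewrite -deltaD !addr0. Qed.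

Lemma delta1 : delta 1 = 0.
Proof.
apply: (@addrI _ (delta 1)); rewrite addr0.
by rewrite -{3}(mulr1 1) deltaM rmorph1 mulr1 mul1r.
Qed.

Local Notation sk := (skew_coef sigma delta).

Lemma skew_coef0 n k : sk n k 0 = 0.
Proof.
by elim: n k => [|n IHn] [|k] //=; rewrite !IHn ?rmorph0 delta0 ?addr0.
Qed.

Lemma skew_coef1 n k : sk n k 1 = (k == n)%:R.
Proof.
elim: n k => [|n IHn] [|k] /=; rewrite ?IHn ?eqSS //.
- by case: (0 == n)%N; rewrite ?delta0 ?delta1 add0r.
- case: (k == n); case: (k.+1 == n);
    by rewrite ?rmorph1 ?rmorph0 ?delta0 ?delta1 ?addr0.
Qed.

Lemma skew_coef_gt n k r : (n < k)%N -> sk n k r = 0.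
Proof.
elim: n k => [|n IHn] [|k] //= lt_nk.
by rewrite !IHn ?rmorph0 ?delta0 ?addr0 //; lia.
Qed.

Variable m : R -> Prop.
Hypothesis m_ideal : two_sided_ideal m.
Hypothesis sigma_m : forall x, m x -> m (sigma x).
Hypothesis delta_m : forall r, m (delta r).
Hypothesis delta_m2 : forall r, m r -> mpow m 2 (delta r).

Lemma sigma_mpow e x : mpow m e x -> mpow m e (sigma x).
Proof.
elim: e x => [|e IHe] x //=; move: x.
apply: (addcl_map (f := sigma)); [exact: rmorph0 | exact: rmorphD|].
move=> _ [a [b [ma mb ->]]]; apply: addclP; exists (sigma a), (sigma b).
by rewrite rmorphM; split=> //; [exact: sigma_m | exact: IHe].
Qed.

Lemma delta_mpow e x : mpow m e x -> mpow m e.+1 (delta x).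
Proof.
elim: e x => [|e IHe] x; first by move=> _; apply: mpow1.
rewrite [mpow m e.+1 x]/=; move: x.
apply: (addcl_map (f := delta)); [exact: delta0 | exact: deltaD|].
move=> _ [a [b [ma mb ->]]]; rewrite deltaM.
apply: (@mpowD _ _ e.+2); last first.
  by apply: addclP; exists (sigma a), (delta b); split; [exact: sigma_m | exact: IHe|].
by rewrite -add2n; apply: mpow_mul => //; exact: delta_m2.
Qed.

(* Moving r to the left of Y^n, each of the n - k letters Y that get absorbed
   contributes a delta, which raises the m-adic valuation by one. *)
Lemma skew_coef_mpow e n k r : mpow m e r -> mpow m (e + (n - k)) (sk n k r).
Proof.
move=> mr; elim: n k => [|n IHn] k /=.
  by case: (k == 0%N); [rewrite sub0n addn0 | exact: mpow0].
apply: mpowD.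
  by case: k => [|k]; [exact: mpow0 | rewrite subSS; apply: sigma_mpow].
by apply: (@mpow_le _ _ (e + (n - k)).+1); [lia | exact: delta_mpow].
Qed.

End SigmaDerivation.

Definition Ypow (R : nzRingType) (n : nat) : series R := fun k => (k == n)%:R.
Definition trunc (R : nzRingType) (f : series R) n : series R :=
  fun k => if (k < n)%N then f k else 0.
Definition shift (R : nzRingType) (f : series R) n : series R := fun k => f (k + n)%N.

Lemma trunc_polynomial (R : nzRingType) (f : series R) n :
  polynomial_series (trunc f n).
Proof. by exists n => k le_nk; rewrite /trunc ltnNge le_nk. Qed.

Lemma cst_polynomial (R : nzRingType) (b : R) : polynomial_series (cst b).
Proof. by exists 1%N => -[]. Qed.

Section SkewAction.
Variables (R : nzRingType) (m : R -> Prop).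
Variables (sigma : {rmorphism R -> R}) (delta : R -> R).
Hypothesis delta_der : sigma_derivation sigma delta.
Variables (M : zmodType) (act : series R -> M -> M).
Hypothesis act_module : skew_A_module m sigma delta act.

Local Notation sk := (skew_coef sigma delta).
Local Notation pprod := (partial_prod sigma delta).

Lemma actD f x y : act f (x + y) = act f x + act f y.
Proof. by case: act_module => actD _ _ _; apply: actD. Qed.

Lemma act_addl f g x : act (series_add f g) x = act f x + act g x.
Proof. by case: act_module => _ addl _ _; apply: addl. Qed.

Lemma act1 x : act (cst 1) x = x.
Proof. by case: act_module => _ _ act1 _; apply: act1. Qed.

Lemma act_skew_prod f g h x :
  is_skew_prod m sigma delta f g h -> act h x = act f (act g x).
Proof. by case: act_module => _ _ _ actM; apply: actM. Qed.

Lemma act0 f : act f 0 = 0.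
Proof. by apply: (@addrI _ (act f 0)); rewrite -actD !addr0. Qed.

Lemma actN f x : act f (- x) = - act f x.
Proof. by apply: (@addrI _ (act f x)); rewrite -actD !subrr act0. Qed.

Lemma actB f x y : act f (x - y) = act f x - act f y.
Proof. by rewrite actD actN. Qed.

Lemma act_sum f (I : Type) (r : seq I) (P : pred I) (F : I -> M) :
  act f (\sum_(i <- r | P i) F i) = \sum_(i <- r | P i) act f (F i).
Proof. exact: (big_morph _ (actD f) (act0 f)). Qed.

Lemma act_ext f g x : (forall k, f k = g k) -> act f x = act g x.
Proof. by move=> /functional_extensionality ->. Qed.

Lemma act_series0 x : act (fun _ => 0) x = 0.
Proof.
apply: (@addrI _ (act (fun _ => 0) x)); rewrite addr0 -act_addl.
by apply: act_ext => k; rewrite /series_add addr0.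
Qed.

Lemma act_cst0 x : act (cst 0) x = 0.
Proof. by rewrite -(act_series0 x); apply: act_ext => -[]. Qed.

Lemma act_cstD a b x : act (cst (a + b)) x = act (cst a) x + act (cst b) x.
Proof. by rewrite -act_addl; apply: act_ext => -[|k]; rewrite /series_add /= ?addr0. Qed.

Lemma act_cstN a x : act (cst (- a)) x = - act (cst a) x.
Proof. by apply: (@addrI _ (act (cst a) x)); rewrite subrr -act_cstD subrr act_cst0. Qed.

Lemma skew_prod_stationary f g h :
  (forall j, exists N0, forall N, (N0 <= N)%N -> pprod f g N j = h j) ->
  is_skew_prod m sigma delta f g h.
Proof.
move=> stat j e; have [N0 {}stat] := stat j.
by exists N0 => N le_N0N; rewrite stat // subrr; exact: mpow0.
Qed.

Lemma partial_prod_cstl b g N j : (0 < N)%N -> pprod (cst b) g N j = b * g j.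
Proof.
case: N => // N _; rewrite /partial_prod.
rewrite (eq_bigr (fun i : 'I_j.+1 => b * (if (j - i == 0)%N then g i else 0))) => [|i _].
  rewrite big_ord_recr /= subnn eqxx big1 ?add0r // => i _.
  by rewrite subn_eq0 leqNgt ltn_ord mulr0.
by rewrite big_ord_recl /= big1 ?addr0 // => k _; rewrite mul0r.
Qed.

Lemma partial_prod_cstr g c N k :
  pprod g (cst c) N k = \sum_(n < N) g n * sk n k c.
Proof.
rewrite /partial_prod big_ord_recl /= subn0 [X in _ + X]big1 ?addr0 // => i _.
by rewrite big1 // => n _; rewrite /cst /= (skew_coef0 delta_der) mulr0.
Qed.

Lemma act_cstl b g x : act (fun k => b * g k) x = act (cst b) (act g x).
Proof.
apply/act_skew_prod/skew_prod_stationary => j.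
by exists 1%N => N; exact: partial_prod_cstl.
Qed.

Lemma act_cstM a b x : act (cst (a * b)) x = act (cst a) (act (cst b) x).
Proof. by rewrite -act_cstl; apply: act_ext => -[|k]; rewrite /= ?mulr0. Qed.

Lemma partial_prod_Ypowr g n N j : (j < N)%N ->
  pprod g (Ypow R n) N j = if (n <= j)%N then g (j - n)%N else 0.
Proof.
move=> lt_jN; rewrite /partial_prod -ltnS.
rewrite -(big_ord1_eq (+%R : Monoid.law (0 : R)) (fun i => g (j - i)%N)).
rewrite [RHS]big_mkcond /=; apply: eq_bigr => i _; rewrite /Ypow eq_sym.
case: eqP => _; last by rewrite big1 // => k _; rewrite (skew_coef0 delta_der) mulr0.
under eq_bigr do rewrite (skew_coef1 delta_der) eq_sym.
by rewrite sum_ord_deltar (leq_ltn_trans (leq_subr _ _) lt_jN).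
Qed.

Lemma act_Ypowr g n x :
  act (fun k => if (n <= k)%N then g (k - n)%N else 0) x = act g (act (Ypow R n) x).
Proof.
apply/act_skew_prod/skew_prod_stationary => j.
by exists j.+1 => N; exact: partial_prod_Ypowr.
Qed.

Lemma act_YpowD a b x : act (Ypow R (a + b)) x = act (Ypow R a) (act (Ypow R b) x).
Proof.
rewrite -act_Ypowr; apply: act_ext => k; rewrite /Ypow.
case: leqP => [le_bk|lt_kb]; last by rewrite (_ : k == a + b = false) //; lia.
by congr (_%:R); apply/eqP/eqP; lia.
Qed.

Lemma act_trunc_shift f n x :
  act f x = act (trunc f n) x + act (shift f n) (act (Ypow R n) x).
Proof.
rewrite -act_Ypowr -act_addl; apply: act_ext => k.
by rewrite /series_add /trunc /shift; case: ltnP => [_|/subnK->]; rewrite ?addr0 ?add0r.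
Qed.

Lemma act_polynomial n h x : (forall k, (n <= k)%N -> h k = 0) ->
  act h x = \sum_(i < n) act (cst (h i)) (act (Ypow R i) x).
Proof.
elim: n h => [|n IHn] h h_vanish.
  by rewrite big_ord0 -(act_series0 x); apply: act_ext => k; apply: h_vanish.
have -> : act h x = act (series_add (trunc h n) (fun k => h n * Ypow R n k)) x.
  apply: act_ext => k; rewrite /series_add /trunc /Ypow.
  case: (ltngtP k n) => [_|lt_nk|->]; rewrite ?mulr0 ?addr0 ?mulr1 ?add0r //.
  by rewrite h_vanish.
rewrite act_addl act_cstl IHn => [|k le_nk]; last by rewrite /trunc ltnNge le_nk.
by rewrite big_ord_recr; congr (_ + _); apply: eq_bigr => i _; rewrite /trunc ltn_ord.
Qed.

Lemma act_Ypow_cst n r x :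
  act (Ypow R n) (act (cst r) x) =
  \sum_(i < n.+1) act (cst (sk n i r)) (act (Ypow R i) x).
Proof.
have -> : act (Ypow R n) (act (cst r) x) = act (fun k => sk n k r) x.
  symmetry; apply/act_skew_prod/skew_prod_stationary => j; exists n.+1 => N le_nN.
  rewrite /partial_prod /Ypow big_ord_recl /= subn0 [X in _ + X]big1 => [|i _].
    by rewrite (sum_ord_deltal (fun k => sk k j _)) le_nN addr0.
  rewrite (sum_ord_deltal (fun k => sk k _ _)) /cst /=.
  by rewrite (skew_coef0 delta_der); case: ifP.
by apply: act_polynomial => k; exact: skew_coef_gt.
Qed.

Lemma act_lincomb n (a : nat -> R) (H : nat -> series R) x :
  act (fun k => \sum_(t < n) a t * H t k) x = \sum_(t < n) act (cst (a t)) (act (H t) x).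
Proof.
elim: n => [|n IHn].
  by rewrite big_ord0 -(act_series0 x); apply: act_ext => k; exact: big_ord0.
rewrite big_ord_recr /= -IHn -act_cstl -act_addl; apply: act_ext => k.
by rewrite /series_add big_ord_recr.
Qed.

End SkewAction.

Section MadicCompactness.
Variables (R : nzRingType) (m : R -> Prop).
Hypothesis m_ideal : two_sided_ideal m.
Hypothesis m_compact : madic_compact m.

Lemma madic_open_ball x e : madic_open m (fun y => mpow m e (y - x)).
Proof.
move=> y mxy; exists e => z myz.
by rewrite -(subrK y z) -addrA; apply: mpowD.
Qed.

Lemma madic_separated x : (forall e, mpow m e x) -> x = 0.
Proof. by case: m_compact => _; apply. Qed.

Lemma madic_finite_net e :
  exists K (rep : 'I_K -> R), forall x, exists j, mpow m e (x - rep j).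
Proof.
case: m_compact => cover _; apply: (cover R (fun r y => mpow m e (y - r))).
- by move=> r; apply: madic_open_ball.
- by move=> x; exists x; rewrite subrr; apply: mpow0.
Qed.

(* Otherwise every point has a neighbourhood that u eventually avoids, and
   finitely many of these neighbourhoods cover R. *)
Lemma madic_cluster_point (u : nat -> R) :
  exists r, forall k N, exists n, (N <= n)%N /\ mpow m k (u n - r).
Proof.
apply: NNPP => no_cluster.
have far : forall r, exists kN : nat * nat,
    forall n, (kN.2 <= n)%N -> ~ mpow m kN.1 (u n - r).
  move=> r; apply: NNPP => near_r; apply: no_cluster; exists r => k N.
  apply: NNPP => no_n; apply: near_r; exists (k, N) => n le_Nn mn.
  by apply: no_n; exists n.
have [f f_far] := choice _ far.
case: m_compact => cover _.
have [K [s s_cover]] : exists K (s : 'I_K -> R),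
    forall x, exists j, mpow m (f (s j)).1 (x - s j).
  apply: (cover R (fun r y => mpow m (f r).1 (y - r))) => [r|x].
    exact: madic_open_ball.
  by exists x; rewrite subrr; apply: mpow0.
have [j mj] := s_cover (u (\max_(j < K) (f (s j)).2)).
by apply: (f_far (s j)) mj; apply: (leq_bigmax_cond (F := fun j => (f (s j)).2)).
Qed.

Lemma madic_cauchy_cvg (u : nat -> R) :
  (forall e, exists N0, forall N N', (N0 <= N)%N -> (N <= N')%N ->
     mpow m e (u N' - u N)) ->
  exists L, forall e, exists N0, forall N, (N0 <= N)%N -> mpow m e (L - u N).
Proof.
move=> cauchy; have [r r_cluster] := madic_cluster_point u; exists r => e.
have [N0 N0_cauchy] := cauchy e; exists N0 => N le_N0N.
have [n [le_Nn mn]] := r_cluster e N.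
rewrite -(subrK (u n) r) -addrA; apply: mpowD; last exact: N0_cauchy.
by rewrite -opprB; apply: mpowN.
Qed.

Lemma madic_subseq_cvg (u : nat -> R) : exists (phi : nat -> nat) r,
  (forall k, phi k < phi k.+1)%N /\ forall k, mpow m k (u (phi k) - r).
Proof.
have [r r_cluster] := madic_cluster_point u.
have [g g_cluster] := choice _ (fun kN : nat * nat => r_cluster kN.1 kN.2).
pose phi := fix phi k := if k is k'.+1 then g (k, (phi k').+1) else g (0%N, 0%N).
exists phi, r; split=> [k|[|k]] /=.
- by case: (g_cluster (k.+1, (phi k).+1)).
- by case: (g_cluster (0%N, 0%N)).
- by case: (g_cluster (k.+1, (phi k).+1)).
Qed.

Lemma madic_subseq_cvg_fin (U : nat -> nat -> R) (t : nat) :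
  exists (phi : nat -> nat) (rho : nat -> R), (forall k, phi k < phi k.+1)%N /\
    forall k i, (i < t)%N -> mpow m k (U (phi k) i - rho i).
Proof.
elim: t => [|t [phi [rho [phi_incr rho_lim]]]]; first by exists id, (fun _ => 0).
have [psi [r [psi_incr r_lim]]] := madic_subseq_cvg (fun k => U (phi k) t).
exists (phi \o psi), (fun i => if i == t then r else rho i); split=> [k|k i].
  exact: (homo_ltn ltn_trans phi_incr).
rewrite ltnS leq_eqVlt => /predU1P[->|lt_it]; first by rewrite eqxx.
rewrite ltn_eqF //; apply: (mpow_le (leq_incr_self psi_incr k)).
exact: rho_lim.
Qed.

End MadicCompactness.

Section NoetherianRing.
Variable R : nzRingType.

Definition left_span (l : seq R) x :=
  exists c : nat -> R, x = \sum_(t < size l) c t * l`_t.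

Lemma acc_finitely_generated (Ideal : (R -> Prop) -> Prop) (span : seq R -> R -> Prop)
    (J : R -> Prop) :
  (forall I : nat -> R -> Prop, (forall n, Ideal (I n)) ->
     (forall n x, I n x -> I n.+1 x) ->
     exists N, forall n x, (N <= n)%N -> I n x -> I N x) ->
  (forall l, Ideal (span l)) ->
  (forall l a x, span l x -> span (rcons l a) x) ->
  (forall l a, span (rcons l a) a) ->
  exists l : seq R, (forall t, (t < size l)%N -> J l`_t) /\ forall x, J x -> span l x.
Proof.
move=> acc span_ideal span_rcons span_last; apply: NNPP => not_fg.
have grow : forall l, (forall t, (t < size l)%N -> J l`_t) ->
    exists a, J a /\ ~ span l a.
  move=> l Jl; apply: NNPP => no_a; apply: not_fg; exists l; split=> // x Jx.
  by apply: NNPP => nx; apply: no_a; exists x.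
pose next l := epsilon (inhabits (0 : R)) (fun a => J a /\ ~ span l a).
pose L := fix L n := if n is n'.+1 then rcons (L n') (next (L n')) else [::].
have JL n t : (t < size (L n))%N -> J (L n)`_t.
  elim: n t => [|n IHn] t //=; rewrite size_rcons nth_rcons ltnS leq_eqVlt.
  case/predU1P=> [->|lt_t]; last by rewrite lt_t; apply: IHn.
  by rewrite ltnn eqxx; case: (epsilon_spec (inhabits (0 : R)) _ (grow _ IHn)).
have [N N_stable] := acc (fun n => span (L n)) (fun n => span_ideal _)
  (fun n x => span_rcons _ _ x).
have := N_stable N.+1 (next (L N)) (leqnSn N) (span_last _ _).
by case: (epsilon_spec (inhabits (0 : R)) _ (grow _ (JL N))).
Qed.

Lemma left_ideal_fg (J : R -> Prop) : noetherian R -> left_ideal J ->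
  exists l : seq R,
    (forall t, (t < size l)%N -> J l`_t) /\ forall x, J x -> left_span l x.
Proof.
move=> [acc _] _; apply: (acc_finitely_generated (Ideal := @left_ideal R)) => //.
- move=> l; split.
  + by exists (fun _ => 0); rewrite big1 // => t _; rewrite mul0r.
  + move=> _ _ [c ->] [d ->]; exists (fun t => c t + d t).
    by rewrite -big_split; apply: eq_bigr => t _; rewrite mulrDl.
  + move=> r _ [c ->]; exists (fun t => r * c t).
    by rewrite mulr_sumr; apply: eq_bigr => t _; rewrite mulrA.
- move=> l a _ [c ->]; exists (fun t => if (t < size l)%N then c t else 0).
  rewrite size_rcons big_ord_recr /= ltnn mul0r addr0.
  by apply: eq_bigr => t _; rewrite ltn_ord nth_rcons ltn_ord.
- move=> l a; exists (fun t => (t == size l)%:R).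
  rewrite size_rcons big_ord_recr /= eqxx mul1r nth_rcons ltnn eqxx big1 ?add0r //.
  by move=> t _; rewrite ltn_eqF // mul0r.
Qed.

End NoetherianRing.

Definition right_span (R : nzRingType) (l : seq R) x :=
  exists c : nat -> R, x = \sum_(t < size l) l`_t * c t.

(* Right ideals of R are the left ideals of the opposite ring R^c. *)
Lemma right_ideal_fg (R : nzRingType) (J : R -> Prop) :
  noetherian R -> right_ideal J ->
  exists l : seq R,
    (forall t, (t < size l)%N -> J l`_t) /\ forall x, J x -> right_span l x.
Proof. by case=> accl accr; apply: (@left_ideal_fg R^c _ (conj accr accl)). Qed.

Section CoordinateSubmodules.
Variable R : nzRingType.
Local Notation vec := (nat -> R).
Local Notation v0 := (fun _ : nat => (0 : R)).

Definition vec_submodule (L : vec -> Prop) :=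
  [/\ L v0, forall v w, L v -> L w -> L (fun i => v i + w i) &
      forall r v, L v -> L (fun i => r * v i)].

Definition lincomb (Lam : seq vec) (c : nat -> R) : vec :=
  fun i => \sum_(t < size Lam) c t * nth v0 Lam t i.

Definition generates_upto (s : nat) (L : vec -> Prop) (Lam : seq vec) :=
  (forall t, (t < size Lam)%N -> L (nth v0 Lam t)) /\
  forall v, L v -> exists c, forall i, (i < s)%N -> v i = lincomb Lam c i.

Lemma vec_submodule_lincomb L Lam c : vec_submodule L ->
  (forall t, (t < size Lam)%N -> L (nth v0 Lam t)) -> L (lincomb Lam c).
Proof.
move=> [L0 LD LZ] L_Lam; rewrite /lincomb.
suff: forall n, (n <= size Lam)%N -> L (fun i => \sum_(t < n) c t * nth v0 Lam t i).
  by apply; exact: leqnn.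
elim=> [|n IHn] le_n.
  by congr L: L0; apply: functional_extensionality => i; rewrite big_ord0.
have -> : (fun i => \sum_(t < n.+1) c t * nth v0 Lam t i) =
    (fun i => \sum_(t < n) c t * nth v0 Lam t i + c n * nth v0 Lam n i).
  by apply: functional_extensionality => i; rewrite big_ord_recr.
by apply: LD; [apply: IHn; exact: ltnW | apply: LZ; exact: L_Lam].
Qed.

Lemma lincomb_cat Lam1 Lam2 c i :
  lincomb (Lam1 ++ Lam2) c i =
  lincomb Lam1 c i + lincomb Lam2 (fun t => c (size Lam1 + t)%N) i.
Proof.
rewrite /lincomb size_cat big_split_ord /=; congr (_ + _); apply: eq_bigr => t _.
  by rewrite nth_cat ltn_ord.
by rewrite nth_cat ltnNge leq_addr /= addKn.
Qed.

Lemma generates_upto_S s L Lift Lam : vec_submodule L ->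
  (forall t, (t < size Lift)%N -> L (nth v0 Lift t)) ->
  (forall v, L v -> exists c, v s = lincomb Lift c s) ->
  generates_upto s (fun v => L v /\ v s = 0) Lam ->
  generates_upto s.+1 L (Lift ++ Lam).
Proof.
move=> L_sub L_Lift Lift_top [K_Lam Lam_gen]; have [_ LD LZ] := L_sub.
split=> [t|v Lv].
  rewrite size_cat nth_cat.
  case: (ltnP t (size Lift)) => [lt_t _|ge_t lt_t]; first exact: L_Lift.
  by case: (K_Lam (t - size Lift)%N) => //; lia.
have [c vs] := Lift_top v Lv.
pose w i := v i + (-1) * lincomb Lift c i.
have Kw : L w /\ w s = 0.
  split; last by rewrite /w vs mulN1r subrr.
  by apply: LD => //; apply: LZ; exact: vec_submodule_lincomb.
have [c2 w_eq] := Lam_gen w Kw.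
exists (fun t => if (t < size Lift)%N then c t else c2 (t - size Lift)%N) => i lt_is.
have -> : v i = lincomb Lift c i + w i by rewrite /w mulN1r addrC subrK.
rewrite lincomb_cat; congr (_ + _).
  by apply: eq_bigr => t _; rewrite ltn_ord.
transitivity (lincomb Lam c2 i); last first.
  by apply: eq_bigr => t _; rewrite ltnNge leq_addr /= addKn.
move: lt_is; rewrite ltnS leq_eqVlt => /predU1P[->|]; last exact: w_eq.
rewrite Kw.2 /lincomb big1 // => t _.
by have [_ ->] := K_Lam t (ltn_ord t); rewrite mulr0.
Qed.

Lemma vec_submodule_fg s L : noetherian R -> vec_submodule L ->
  exists Lam, generates_upto s L Lam.
Proof.
move=> R_noeth; elim: s L => [|s IHs] L L_sub.
  by exists [::]; split=> // v _; exists (fun _ => 0).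
have [L0 LD LZ] := L_sub.
pose J a := exists2 v, L v & v s = a.
have J_ideal : left_ideal J.
  split; first by exists v0.
    by move=> _ _ [v Lv <-] [w Lw <-]; exists (fun i => v i + w i) => //; apply: LD.
  by move=> r _ [v Lv <-]; exists (fun i => r * v i) => //; apply: LZ.
have [l [J_l l_gen]] := left_ideal_fg R_noeth J_ideal.
have [lift lift_spec] : exists lift : nat -> vec,
    forall t, (t < size l)%N -> L (lift t) /\ lift t s = l`_t.
  apply: (choice (fun t v => (t < size l)%N -> L v /\ v s = l`_t)) => t.
  case: (ltnP t (size l)) => [/J_l [v Lv vs]|]; first by exists v.
  by exists v0.
have K_sub : vec_submodule (fun v => L v /\ v s = 0).
  split=> [|v w [Lv vs] [Lw ws]|r v [Lv vs]]; first by [].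
    by rewrite vs ws addr0; split => //; apply: LD.
  by rewrite vs mulr0; split => //; apply: LZ.
have [Lam Lam_gen] := IHs _ K_sub.
exists (mkseq lift (size l) ++ Lam); apply: generates_upto_S => //.
  by move=> t; rewrite size_mkseq => lt_t; rewrite nth_mkseq //; case: (lift_spec t lt_t).
move=> v Lv; have [c ->] := l_gen (v s) (ex_intro2 _ _ v Lv erefl).
exists c; rewrite /lincomb size_mkseq; apply: eq_bigr => t _.
by rewrite nth_mkseq //; case: (lift_spec t (ltn_ord t)) => _ ->.
Qed.

Lemma lincomb_madic_closed (m : R -> Prop) s Lam (zeta : vec) (w r : nat -> vec) :
  madic_compact m -> (forall e i, mpow m e (w e i)) ->
  (forall e i, (i < s)%N -> zeta i - w e i = lincomb Lam (r e) i) ->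
  exists rho, forall i, (i < s)%N -> zeta i = lincomb Lam rho i.
Proof.
move=> m_compact mw w_eq.
have [phi [rho [phi_incr rho_lim]]] :=
  madic_subseq_cvg_fin m_compact (fun e t => r e t) (size Lam).
exists rho => i lt_is; apply/eqP; rewrite -subr_eq0; apply/eqP.
apply: (madic_separated m_compact) => k.
have -> : zeta i - lincomb Lam rho i =
    w (phi k) i + \sum_(t < size Lam) (r (phi k) t - rho t) * nth v0 Lam t i.
  under eq_bigr do rewrite mulrBl.
  by rewrite sumrB -[X in _ = _ + (X - _)]w_eq // addrCA addrA subrK.
apply: mpowD; first exact: (mpow_le (leq_incr_self phi_incr k)).
by apply: mpow_sum => t _; apply: mpow_mulr; apply: rho_lim.
Qed.

End CoordinateSubmodules.

Section FinitelyGeneratedModule.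
Variables (R : nzRingType) (m : R -> Prop).
Hypothesis m_ideal : two_sided_ideal m.
Hypothesis R_noeth : noetherian R.
Hypothesis m_compact : madic_compact m.
Variables (sigma : {rmorphism R -> R}) (delta : R -> R).
Hypothesis sigma_m : forall x, m x -> m (sigma x).
Hypothesis delta_der : sigma_derivation sigma delta.
Hypothesis delta_m : forall r, m (delta r).
Hypothesis delta_m2 : forall r, m r -> mpow m 2 (delta r).
Variables (M : zmodType) (act : series R -> M -> M).
Hypothesis act_module : skew_A_module m sigma delta act.
Variables (s : nat) (gen : 'I_s -> M).
Hypothesis gen_spanning :
  forall x, exists c : 'I_s -> R, x = \sum_(i < s) act (cst (c i)) (gen i).

Local Notation sk := (skew_coef sigma delta).
Local Notation Ypow := (Ypow R).

Definition comb (c : nat -> R) := \sum_(j < s) act (cst (c j)) (gen j).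

Definition mpowM e y := exists c : nat -> R, (forall j, mpow m e (c j)) /\ y = comb c.

Lemma comb0 : comb (fun _ => 0) = 0.
Proof. by rewrite /comb big1 // => j _; rewrite (act_cst0 act_module). Qed.

Lemma combD c d : comb (fun j => c j + d j) = comb c + comb d.
Proof.
by rewrite /comb -big_split; apply: eq_bigr => j _; rewrite (act_cstD act_module).
Qed.

Lemma combN c : comb (fun j => - c j) = - comb c.
Proof. by rewrite /comb -sumrN; apply: eq_bigr => j _; rewrite (act_cstN act_module). Qed.

Lemma combZ r c : comb (fun j => r * c j) = act (cst r) (comb c).
Proof.
rewrite /comb (act_sum act_module); apply: eq_bigr => j _.
by rewrite (act_cstM act_module).
Qed.

Lemma comb_ext c d : (forall i, (i < s)%N -> c i = d i) -> comb c = comb d.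
Proof. by move=> cd; apply: eq_bigr => j _; rewrite cd. Qed.

Lemma mpowM0 e : mpowM e 0.
Proof. by exists (fun _ => 0); split=> [_|]; [exact: mpow0 | rewrite comb0]. Qed.

Lemma mpowMD e x y : mpowM e x -> mpowM e y -> mpowM e (x + y).
Proof.
move=> [c [mc ->]] [d [md ->]]; exists (fun j => c j + d j).
by rewrite combD; split=> // j; apply: mpowD.
Qed.

Lemma mpowMB e x y : mpowM e x -> mpowM e y -> mpowM e (x - y).
Proof.
move=> mx [d [md ->]]; apply: mpowMD => //; exists (fun j => - d j).
by rewrite combN; split=> // j; apply: mpowN.
Qed.

Lemma mpowM_sum e (I : Type) (r : seq I) (P : pred I) (F : I -> M) :
  (forall i, P i -> mpowM e (F i)) -> mpowM e (\sum_(i <- r | P i) F i).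
Proof. by move=> mF; elim/big_ind: _ => //; [exact: mpowM0 | exact: mpowMD]. Qed.

Lemma mpowM_full y : mpowM 0 y.
Proof.
have [c ->] := gen_spanning y; exists (fun i => if insub i is Some j then c j else 0).
by split=> //; apply: eq_bigr => j _; rewrite valK.
Qed.

Lemma mpowM_cst e a y : mpow m e a -> mpowM e (act (cst a) y).
Proof.
have [c [_ ->]] := mpowM_full y; rewrite -combZ => ma.
by exists (fun j => a * c j); split=> // j; apply: mpow_mulr.
Qed.

Lemma mpowM_act_cst e r y : mpowM e y -> mpowM e (act (cst r) y).
Proof.
move=> [c [mc ->]]; rewrite -combZ.
by exists (fun j => r * c j); split=> // j; apply: mpow_mull.
Qed.

Lemma partial_prod_cstr_cvg (g : series R) c k : exists L : R,
  forall e, exists N0, forall N, (N0 <= N)%N ->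
    mpow m e (L - \sum_(n < N) g n * sk n k c).
Proof.
apply: (madic_cauchy_cvg m_ideal m_compact) => e.
exists (e + k)%N => N N' le_N le_NN'.
rewrite -!(big_mkord xpredT (fun n => g n * sk n k c)).
rewrite (@big_cat_nat _ _ _ N 0 N' _ _ (leq0n N) le_NN') /= addrAC subrr add0r.
rewrite big_nat_cond; apply: mpow_sum => n /andP [/andP [le_Nn _] _].
apply: mpow_mull => //; apply: (@mpow_le _ _ (0 + (n - k))); first lia.
exact: (skew_coef_mpow delta_der m_ideal sigma_m delta_m delta_m2).
Qed.

Lemma skew_prod_cstr (g : series R) c : exists h : series R,
  (forall x, act h x = act g (act (cst c) x)) /\
  (forall e, mpow m e c -> forall k, mpow m e (h k)).
Proof.
have [h h_lim] := choice _ (partial_prod_cstr_cvg g c).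
exists h; split=> [x|e mc k].
  apply: (act_skew_prod act_module) => j e; have [N0 N0_lim] := h_lim j e.
  by exists N0 => N le_N0N; rewrite (partial_prod_cstr delta_der); apply: N0_lim.
have [N0 N0_lim] := h_lim k e.
rewrite -[h k](subrK (\sum_(n < N0) g n * sk n k c)); apply: mpowD; first exact: N0_lim.
apply: mpow_sum => n _; apply: mpow_mull => //; apply: (@mpow_le _ _ (e + (n - k))).
  exact: leq_addr.
exact: (skew_coef_mpow delta_der m_ideal sigma_m delta_m delta_m2).
Qed.

(* A series with coefficients in m^e is \sum_t l_t h_t, where the finitely
   many l_t generate the right ideal m^e. *)
Lemma mpowM_act_series e h y : (forall k, mpow m e (h k)) -> mpowM e (act h y).
Proof.
move=> mh.
have mpow_right_ideal : right_ideal (mpow m e).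
  by split=> [|x y'|r x]; [exact: mpow0 | exact: mpowD | exact: mpow_mulr].
have [l [ml l_gen]] := right_ideal_fg R_noeth mpow_right_ideal.
have [rho rho_spec] := choice _ (fun k => l_gen (h k) (mh k)).
rewrite (act_ext _ _ rho_spec).
rewrite (act_lincomb act_module (size l) (fun t => l`_t) (fun t k => rho k t)).
by apply: mpowM_sum => t _; apply: mpowM_cst; apply: ml.
Qed.

Lemma mpowM_act e f y : mpowM e y -> mpowM e (act f y).
Proof.
move=> [c [mc ->]]; rewrite /comb (act_sum act_module); apply: mpowM_sum => j _.
have [h [act_h mh]] := skew_prod_cstr f (c j).
by rewrite -act_h; apply: mpowM_act_series; apply: mh.
Qed.

Lemma mpowM_finite_net e : exists K (rep : 'I_K -> R), forall y,
  exists phi : {ffun 'I_s -> 'I_K},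
    mpowM e (y - \sum_(j < s) act (cst (rep (phi j))) (gen j)).
Proof.
have [K [rep rep_net]] := madic_finite_net m_compact e.
exists K, rep => y; have [c ->] := gen_spanning y.
have [f f_net] := choice _ (fun j : 'I_s => rep_net (c j)).
exists [ffun j => f j]; rewrite -sumrB; apply: mpowM_sum => j _.
by rewrite ffunE -(act_cstN act_module) -(act_cstD act_module); apply: mpowM_cst.
Qed.

(* 1 - Y^p is inverted by the geometric series G = \sum_i Y^(p i). *)
Lemma mpowM_sub_Ypow e p u :
  (0 < p)%N -> mpowM e (u - act (Ypow p) u) -> mpowM e u.
Proof.
move=> p_gt0 mu; pose G : series R := fun k => (p %| k)%:R.
have G_geom z : act G z = z + act G (act (Ypow p) z).
  rewrite -(act_Ypowr delta_der act_module) -{2}(act1 act_module z).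
  rewrite -(act_addl act_module).
  apply: act_ext => -[|k]; rewrite /series_add /G /cst /=.
    by rewrite dvdn0 leqNgt p_gt0 addr0.
  rewrite add0r; case: leqP => [le_pk|lt_kp]; last by rewrite gtnNdvd.
  by rewrite -{1}(subnK le_pk) dvdn_addl.
have -> : u = act G (u - act (Ypow p) u) by rewrite (actB act_module) G_geom addrK.
exact: mpowM_act.
Qed.

(* Pigeonhole on the finitely many residues of the Y^n x modulo m^e M. *)
Lemma Ypow_mpowM_eventually e x :
  exists a, forall n, (a <= n)%N -> mpowM e (act (Ypow n) x).
Proof.
have [K [rep rep_net]] := mpowM_finite_net e.
have [t t_net] := choice _ (fun n => rep_net (act (Ypow n) x)).
have [a [b [lt_ab tab]]] : exists a b, (a < b)%N /\ t a = t b.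
  pose f (i : 'I_#|{ffun 'I_s -> 'I_K}|.+1) := t i.
  have /injectivePn [i [j ne_ij fij]] : ~~ injectiveb f.
    by apply/injectiveP => /leq_card; rewrite card_ord ltnn.
  case: (ltngtP i j) => [lt_ij|lt_ji|/val_inj eq_ij]; first by exists i, j.
    by exists j, i.
  by rewrite eq_ij eqxx in ne_ij.
have ma : mpowM e (act (Ypow a) x).
  apply: (@mpowM_sub_Ypow _ (b - a)); first by rewrite subn_gt0.
  rewrite -(act_YpowD delta_der act_module) subnK ?(ltnW lt_ab) //.
  by have := mpowMB (t_net a) (t_net b); rewrite tab opprB addrA subrK.
exists a => n le_an.
by rewrite -(subnK le_an) (act_YpowD delta_der act_module); apply: mpowM_act.
Qed.

(* In Y^n (r g_j) = \sum_i sk n i r Y^i g_j, the terms with large i have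
   Y^i g_j in m^e M and the others have sk n i r in m^(n - i). *)
Lemma Ypow_mpowM e : exists n, forall x, mpowM e (act (Ypow n) x).
Proof.
have [a a_spec] := choice _ (fun j : 'I_s => Ypow_mpowM_eventually e (gen j)).
pose A := (\max_(j < s) a j)%N.
exists (A + e)%N => x; have [c ->] := gen_spanning x.
rewrite (act_sum act_module); apply: mpowM_sum => j _.
rewrite (act_Ypow_cst delta_der act_module); apply: mpowM_sum => i _.
case: (leqP A i) => [le_Ai|lt_iA].
  apply/mpowM_act_cst/a_spec/(leq_trans _ le_Ai).
  exact: (leq_bigmax_cond (F := a)).
apply: mpowM_cst; apply: (@mpow_le _ _ (0 + (A + e - i))); first lia.
exact: (skew_coef_mpow delta_der m_ideal sigma_m delta_m delta_m2).
Qed.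

Lemma Rsubmodule_closed (N : M -> Prop) :
  N 0 -> (forall x y, N x -> N y -> N (x + y)) ->
  (forall r y, N y -> N (act (cst r) y)) ->
  forall z, (forall e, exists y, N y /\ mpowM e (z - y)) -> N z.
Proof.
move=> N0 ND NZ z z_lim.
have L_sub : vec_submodule (fun c => N (comb c)).
  split=> [|v w Nv Nw|r v Nv]; first by rewrite comb0.
    by rewrite combD; apply: ND.
  by rewrite combZ; apply: NZ.
have [Lam [N_Lam Lam_gen]] := vec_submodule_fg s R_noeth L_sub.
have [zeta [_ z_eq]] := mpowM_full z.
have [y y_spec] := choice _ z_lim.
have [w w_spec] := choice _ (fun e => (y_spec e).2).
have y_coord e : N (comb (fun i => zeta i - w e i)).
  by rewrite combD combN -z_eq -(w_spec e).2 opprB addrC subrK; exact: (y_spec e).1.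
have [r r_spec] := choice _ (fun e => Lam_gen _ (y_coord e)).
have [rho rho_spec] :=
  lincomb_madic_closed m_compact (fun e => (w_spec e).1) r_spec.
by rewrite z_eq (comb_ext rho_spec); exact: (vec_submodule_lincomb rho L_sub N_Lam).
Qed.

Lemma B_submodule_A_submodule (N : M -> Prop) : B_submodule act N -> A_submodule act N.
Proof.
move=> [N0 ND NB]; split=> // f x _ Nx.
apply: Rsubmodule_closed => // [r y Ny|e].
  by apply: NB => //; exact: cst_polynomial.
have [n Yn_small] := Ypow_mpowM e.
exists (act (trunc f n) x); split; first by apply: NB => //; exact: trunc_polynomial.
by rewrite (act_trunc_shift delta_der act_module f n x) addrC addKr; apply: mpowM_act.
Qed.

End FinitelyGeneratedModule.

Section Quotient.
Variables (R : nzRingType) (m : R -> Prop).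
Variables (sigma : {rmorphism R -> R}) (delta : R -> R).
Variables (M : zmodType) (act : series R -> M -> M).
Hypothesis act_module : skew_A_module m sigma delta act.
Hypothesis B_sub_A : forall N, B_submodule act N -> A_submodule act N.
Variables (Q : zmodType) (actQ : series R -> Q -> Q) (phi : M -> Q).
Hypothesis actQ_module : skew_B_module m sigma delta actQ.
Hypothesis phiD : forall x y, phi (x + y) = phi x + phi y.
Hypothesis phi_surj : forall q, exists x, phi x = q.
Hypothesis phi_act :
  forall f x, polynomial_series f -> phi (act f x) = actQ f (phi x).

Lemma phi0 : phi 0 = 0.
Proof. by apply: (@addrI _ (phi 0)); rewrite -phiD !addr0. Qed.

Lemma phiB x y : phi (x - y) = phi x - phi y.
Proof. by apply/eqP; rewrite eq_sym subr_eq -phiD subrK. Qed.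

Lemma phi_act_compat f x y : phi x = phi y -> phi (act f x) = phi (act f y).
Proof.
have ker_B : B_submodule act (fun x => phi x = 0).
  split=> [|x' y' x'0 y'0|g z pg z0]; first exact: phi0.
    by rewrite phiD x'0 y'0 addr0.
  have [actQD _ _ _] := actQ_module.
  by rewrite phi_act // z0; apply: (@addrI _ (actQ g 0)); rewrite -actQD // !addr0.
have [_ _ ker_A] := B_sub_A ker_B.
move=> /eqP; rewrite -subr_eq0 -phiB => /eqP ker_xy.
by apply/eqP; rewrite -subr_eq0 -phiB -(actB act_module); apply/eqP/ker_A.
Qed.

Lemma quotient_A_action : exists actQ' : series R -> Q -> Q,
  [/\ skew_A_module m sigma delta actQ',
      forall f y, polynomial_series f -> actQ' f y = actQ f y &
      forall f x, phi (act f x) = actQ' f (phi x)].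
Proof.
have [sec secK] := choice _ phi_surj.
pose actQ' f q := phi (act f (sec q)).
have phi_act' f x : phi (act f x) = actQ' f (phi x).
  by apply: phi_act_compat; rewrite secK.
exists actQ'; split=> // [|f y pf]; last by rewrite /actQ' phi_act // secK.
split=> [f q1 q2 _|f g q _ _|q|f g h q _ _ _ fgh].
- by rewrite -(secK q1) -(secK q2) -[in LHS]phiD -!phi_act' (actD act_module) phiD.
- by rewrite -(secK q) -!phi_act' (act_addl act_module) phiD.
- by rewrite -{1}(secK q) -phi_act' (act1 act_module) secK.
- by rewrite -(secK q) -!phi_act' (act_skew_prod act_module _ fgh).
Qed.

End Quotient.

Theorem mainTheorem11 (R : nzRingType) (m : R -> Prop)
  (sigma : {rmorphism R -> R}) (delta : R -> R)
  (M : zmodType) (act : series R -> M -> M) :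
  local_with_max_ideal m -> noetherian R -> madic_compact m ->
  bijective sigma -> (forall x, m (sigma x) <-> m x) ->
  sigma_derivation sigma delta ->
  (forall r, m (delta r)) -> (forall r, m r -> mpow m 2 (delta r)) ->
  skew_A_module m sigma delta act -> fg_over_A act -> fg_over_R act ->
  (forall N : M -> Prop, B_submodule act N -> A_submodule act N) /\
  (forall (Q : zmodType) (actQ : series R -> Q -> Q) (phi : M -> Q),
     skew_B_module m sigma delta actQ ->
     (forall x y, phi (x + y) = phi x + phi y) -> (forall q, exists x, phi x = q) ->
     (forall (f : series R) x, polynomial_series f -> phi (act f x) = actQ f (phi x)) ->
     exists actQ' : series R -> Q -> Q,
       [/\ skew_A_module m sigma delta actQ',
           forall (f : series R) y, polynomial_series f -> actQ' f y = actQ f y &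
           forall f x, phi (act f x) = actQ' f (phi x)]).
Proof.
move=> [m_ideal _ _] R_noeth m_compact _ sigma_m delta_der delta_m delta_m2 act_module _.
move=> [s [gen gen_spanning]].
have B_sub_A := B_submodule_A_submodule m_ideal R_noeth m_compact
  (fun x => (sigma_m x).2) delta_der delta_m delta_m2 act_module gen_spanning.
split=> // Q actQ phi actQ_module phiD phi_surj phi_act.
exact: quotient_A_action.
Qed.
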